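(* Let $\tau>0$, $u_n\in\mathcal V_{[0,1]}$ with $M:=\mathcal M(u_n)>0$, let $X:=\{u\in\mathcal V_{[0,1]}:\mathcal M(u)=M\}$ and $S_{\tau,u_n}:=\operatorname{argmax}_{u\in X}\langle u,e^{-\tau\Delta}u_n\rangle_{\mathcal V}$. Let $\alpha_1<\dots<\alpha_K$ be the distinct values of $e^{-\tau\Delta}u_n$ and $a_{\alpha}:=\sum_{i:(e^{-\tau\Delta}u_n)_i=\alpha}d_i^r$. Then there is a unique $k\in\{1,\dots,K\}$ with \[\sum_{l=k+1}^K a_{\alpha_l} < M \leq \sum_{l=k}^K a_{\alpha_l},\] and $u\in S_{\tau,u_n}$ if and only if $u\in X$ and: $u_i=0$ whenever $(e^{-\tau\Delta}u_n)_i<\alpha_k$; $u_i=1$ whenever $(e^{-\tau\Delta}u_n)_i>\alpha_k$; and $M-\sum_{l=k+1}^K a_{\alpha_l}=\sum_{i:(e^{-\tau\Delta}u_n)_i=\alpha_k}d_i^ru_i$. Consequently $S_{\tau,u_n}$ has exactly one element if and only if $M=\sum_{l=k}^K a_{\alpha_l}$ or there is exactly one $i\in V$ with $(e^{-\tau\Delta}u_n)_i=\alpha_k$.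
   Context: $G=(V,E)$ is a finite, simple, connected, undirected graph with weights $\omega_{ij}=\omega_{ji}>0$ for $ij\in E$, $\omega_{ij}=0$ otherwise; $d_i=\sum_j\omega_{ij}$, $r\in[0,1]$ fixed. $\mathcal V$ = functions $V\to\mathbb R$ with $\langle u,v\rangle_{\mathcal V}=\sum_i u_iv_id_i^r$; $\mathcal V_{[0,1]}$ = functions $V\to[0,1]$. $(\Delta u)_i=d_i^{-r}\sum_j\omega_{ij}(u_i-u_j)$, $e^{-\tau\Delta}$ its matrix exponential. $\mathbf 1$ all-ones; $\mathcal M(u)=\langle u,\mathbf 1\rangle_{\mathcal V}$. *)

From HB Require Import structures.
From mathcomp Require Import all_boot all_order all_algebra.
From mathcomp Require Import all_classical all_reals all_analysis.
Set Implicit Arguments. Unset Strict Implicit. Unset Printing Implicit Defensive.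
Import Order.TTheory GRing.Theory Num.Theory.
Local Open Scope ring_scope.

Section Graph.
Variables (R : realType) (V : finType).

(* weighted finite simple connected undirected graph, given by its weights:
   omega i j > 0 iff ij is an edge, 0 otherwise. *)
Definition is_weighted_graph (omega : V -> V -> R) : Prop :=
  (forall i j, omega i j = omega j i) /\
  (forall i j, 0 <= omega i j) /\
  (forall i, omega i i = 0) /\
  (forall i j, connect (fun x y => 0 < omega x y) i j).

Definition deg (omega : V -> V -> R) (i : V) : R := \sum_j omega i j.

Definition degr (omega : V -> V -> R) (r : R) (i : V) : R := powR (deg omega i) r.

Definition ipV (omega : V -> V -> R) (r : R) (u v : V -> R) : R :=
  \sum_i u i * v i * degr omega r i.

Definition mass (omega : V -> V -> R) (r : R) (u : V -> R) : R :=
  ipV omega r u (fun _ => 1).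

Definition graphLap (omega : V -> V -> R) (r : R) (u : V -> R) : V -> R :=
  fun i => (degr omega r i)^-1 * \sum_j omega i j * (u i - u j).

(* e^{-tau Delta} u : the matrix exponential applied to u, as the sum of
   the (entrywise convergent) exponential series sum_k (-tau)^k/k! Delta^k u *)
Definition heat (omega : V -> V -> R) (r tau : R) (u : V -> R) : V -> R :=
  fun i => limn (fun N : nat =>
    \sum_(k < N) ((- tau) ^+ k / (k`!)%:R) * iter k (graphLap omega r) u i).

Definition in01 (u : V -> R) : Prop := forall i, 0 <= u i <= 1.

Definition inX (omega : V -> V -> R) (r M : R) (u : V -> R) : Prop :=
  in01 u /\ mass omega r u = M.

Definition inS (omega : V -> V -> R) (r tau : R) (un u : V -> R) : Prop :=
  inX omega r (mass omega r un) u /\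
  forall v, inX omega r (mass omega r un) v ->
    ipV omega r v (heat omega r tau un) <= ipV omega r u (heat omega r tau un).

Definition values (f : V -> R) : seq R :=
  sort <=%R (undup [seq f i | i <- enum V]).

Definition aval (omega : V -> V -> R) (r : R) (f : V -> R) (alpha : R) : R :=
  \sum_(i | f i == alpha) degr omega r i.

(* sum_{l = k}^{K} a_{alpha_l}, with 0-based index k into [values f] *)
Definition tailsum (omega : V -> V -> R) (r : R) (f : V -> R) (k : nat) : R :=
  \sum_(k <= l < size (values f)) aval omega r f (nth 0 (values f) l).

End Graph.

From HB Require Import structures.
From mathcomp Require Import all_boot all_order all_algebra.
From mathcomp Require Import all_classical all_reals all_analysis.
From mathcomp Require Import ring lra.
Set Implicit Arguments. Unset Strict Implicit. Unset Printing Implicit Defensive.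
Import Order.TTheory GRing.Theory Num.Theory.
Local Open Scope ring_scope.

(* Only the order of the values of [f := e^{-tau Delta} u_n] matters.  For [u], [v] of equal
   mass and any level [alpha], [<v, f> - <u, f> = sum_i d_i^r (v_i - u_i) (f_i - alpha)], and
   every term is [<= 0] as soon as [u] is [0] below [alpha] and [1] above it.  So such
   threshold functions of mass [M] are maximizers, and every maximizer agrees with one of them
   off the level set [{f = alpha}].  Threshold functions of mass [M] exist exactly for the
   level [alpha_k] at which the tail sums of the [a_alpha] straddle [M]; on [{f = alpha_k}]
   only the weighted sum is prescribed, which determines [u] iff it forces [u = 1] there or
   the level set is a single vertex. *)

Section Values.
Variables (R : realType) (V : finType) (f : V -> R).

Local Notation vs := (values f).

Definition value_rank (i : V) : nat := index (f i) vs.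

Lemma values_uniq : uniq vs.
Proof. by rewrite /values sort_uniq undup_uniq. Qed.

Lemma values_sorted : sorted <%R vs.
Proof. by rewrite /values sort_lt_sorted undup_uniq. Qed.

Lemma mem_values i : f i \in vs.
Proof. by rewrite /values mem_sort mem_undup map_f // mem_enum. Qed.

Lemma value_rank_lt i : (value_rank i < size vs)%N.
Proof. by rewrite /value_rank index_mem mem_values. Qed.

Lemma nth_value_rank i : nth 0 vs (value_rank i) = f i.
Proof. by rewrite /value_rank nth_index // mem_values. Qed.

Lemma nth_values_attained l : (l < size vs)%N -> exists i, f i = nth 0 vs l.
Proof.
move=> hl; have := mem_nth 0 hl; rewrite /values mem_sort mem_undup.
by case/mapP => i _ ->; exists i.
Qed.

Lemma ltr_nth_values a b : (a < size vs)%N -> (b < size vs)%N ->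
  (nth 0 vs a < nth 0 vs b) = (a < b)%N.
Proof.
move=> ha hb; have [hab|hba] := ltnP a b.
  exact: (sorted_ltn_nth lt_trans 0 values_sorted).
apply/negbTE; rewrite -leNgt.
by apply: (sorted_leq_nth le_trans lexx 0 (sort_le_sorted _)) => //; rewrite inE.
Qed.

Lemma eq_nth_values i l : (l < size vs)%N -> (f i == nth 0 vs l) = (l == value_rank i).
Proof.
move=> hl; apply/eqP/eqP => [fi|->]; last by rewrite nth_value_rank.
by rewrite /value_rank fi index_uniq // values_uniq.
Qed.

Lemma ltr_nth_value_rank i k : (k < size vs)%N ->
  (nth 0 vs k < f i) = (k < value_rank i)%N.
Proof. by move=> hk; rewrite -{1}nth_value_rank ltr_nth_values // value_rank_lt. Qed.

End Values.

Section TailSums.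
Variables (R : realType) (V : finType) (omega : V -> V -> R) (r : R) (f : V -> R).

Local Notation w := (degr omega r).
Local Notation T := (tailsum omega r f).
Local Notation vs := (values f).

Lemma tailsum_rank j : T j = \sum_(i | (j <= value_rank f i)%N) w i.
Proof.
rewrite /tailsum /aval.
under eq_bigr => l _ do rewrite big_mkcond /=.
rewrite exchange_big /= [RHS]big_mkcond /=; apply: eq_bigr => i _.
rewrite (eq_big_nat _ _ (F2 := fun l => if l == value_rank f i then w i else 0));
  last by move=> l /andP[_ hl]; rewrite eq_nth_values.
rewrite -big_mkcond /=.
have [hj|hj] := boolP (j <= value_rank f i)%N.
  rewrite -big_filter filter_pred1_uniq ?iota_uniq ?big_seq1 //.
  by rewrite mem_index_iota hj value_rank_lt.
by rewrite big1_seq // => l /andP[/eqP -> ]; rewrite mem_index_iota (negbTE hj).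
Qed.

Lemma tailsum0 : T 0 = \sum_i w i.
Proof. by rewrite tailsum_rank. Qed.

Lemma tailsum_size : T (size vs) = 0.
Proof. by rewrite /tailsum big_geq. Qed.

Lemma tailsumS k : (k < size vs)%N -> T k = aval omega r f (nth 0 vs k) + T k.+1.
Proof. by move=> hk; rewrite /tailsum big_ltn. Qed.

Lemma tailsumS_gt k : (k < size vs)%N -> T k.+1 = \sum_(i | nth 0 vs k < f i) w i.
Proof. by move=> hk; rewrite tailsum_rank; apply: eq_bigl => i; rewrite ltr_nth_value_rank. Qed.

Lemma threshold_index_exists M : 0 < M -> M <= T 0 ->
  exists2 k, (k < size vs)%N & T k.+1 < M <= T k.
Proof.
move=> M_gt0 M_le; pose P k := (k <= size vs)%N && (M <= T k).
have exP : exists k, P k by exists 0%N; rewrite /P M_le.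
have P_le k : P k -> (k <= size vs)%N by case/andP.
have [k /andP[k_le MTk] k_max] := ex_maxnP exP P_le.
have k_lt : (k < size vs)%N.
  rewrite ltn_neqAle k_le andbT; apply/eqP => ek.
  by move: MTk; rewrite ek tailsum_size leNgt M_gt0.
exists k => //; rewrite MTk andbT ltNge; apply/negP => MTk1.
by have := k_max k.+1; rewrite /P k_lt MTk1 ltnn => /(_ isT).
Qed.

Hypothesis w_ge0 : forall i, 0 <= w i.

Lemma tailsum_antitone a b : (a <= b)%N -> T b <= T a.
Proof.
move=> hab; rewrite !tailsum_rank [leLHS]big_mkcond [leRHS]big_mkcond.
apply: ler_sum => i _; case: ifP => hb; first by rewrite (leq_trans hab hb).
by case: ifP.
Qed.

Lemma threshold_index_unique M k k' :
  T k.+1 < M <= T k -> T k'.+1 < M <= T k' -> k' = k.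
Proof.
move=> /andP[lt_k le_k] /andP[lt_k' le_k'].
have [h|h|//] := ltngtP k' k.
- by have := le_lt_trans (le_trans le_k (tailsum_antitone h)) lt_k'; rewrite ltxx.
- by have := le_lt_trans (le_trans le_k' (tailsum_antitone h)) lt_k; rewrite ltxx.
Qed.

End TailSums.

Section Maximizers.
Variables (R : realType) (V : finType) (omega : V -> V -> R) (r : R).

Local Notation w := (degr omega r).
Local Notation mass := (mass omega r).
Local Notation ipV := (ipV omega r).

Definition is_maximizer (f : V -> R) (M : R) (u : V -> R) : Prop :=
  inX omega r M u /\ forall v, inX omega r M v -> ipV v f <= ipV u f.

Hypothesis w_gt0 : forall i, 0 < w i.

Section Threshold.
Variables (f : V -> R) (alpha : R).

Definition is_threshold (u : V -> R) : Prop :=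
  (forall i, f i < alpha -> u i = 0) /\ (forall i, alpha < f i -> u i = 1).

Definition threshold_fun (x : V -> R) : V -> R :=
  fun i => if alpha < f i then 1 else if f i == alpha then x i else 0.

Lemma threshold_fun_is_threshold x : is_threshold (threshold_fun x).
Proof.
split=> i h; rewrite /threshold_fun ?h //.
by rewrite (lt_gtF h) (lt_eqF h).
Qed.

Lemma threshold_fun_in01 x : in01 x -> in01 (threshold_fun x).
Proof.
move=> x01 i; rewrite /threshold_fun.
by case: ifP => _; [rewrite ler01 lexx | case: ifP => _; [exact: x01 | rewrite lexx ler01]].
Qed.

Lemma threshold_fun_level x i : f i == alpha -> threshold_fun x i = x i.
Proof. by move=> /eqP fi; rewrite /threshold_fun fi ltxx eqxx. Qed.

Lemma mass_threshold u : is_threshold u ->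
  mass u = \sum_(i | alpha < f i) w i + \sum_(i | f i == alpha) w i * u i.
Proof.
move=> [u0 u1]; rewrite [X in X + _]big_mkcond [X in _ + X]big_mkcond -big_split.
apply: eq_bigr => i _ /=; rewrite mulr1.
have [h|h|_] := ltgtP (f i) alpha.
- by rewrite u0 // mul0r add0r.
- by rewrite u1 // mul1r addr0.
- by rewrite add0r mulrC.
Qed.

Lemma ipV_sub_centered u v : mass v = mass u ->
  ipV v f - ipV u f = \sum_i w i * (v i - u i) * (f i - alpha).
Proof.
move=> muv.
have -> : \sum_i w i * (v i - u i) * (f i - alpha) =
          ipV v f - ipV u f - alpha * (mass v - mass u).
  by rewrite /mass /ipV -!sumrB mulr_sumr -sumrB; apply: eq_bigr => i _; ring.
by rewrite muv subrr mulr0 subr0.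
Qed.

Lemma threshold_gap_le0 u v i : in01 v -> is_threshold u ->
  w i * (v i - u i) * (f i - alpha) <= 0.
Proof.
move=> v01 [u0 u1]; have /andP[v0 v1] := v01 i.
rewrite -mulrA pmulr_rle0 //.
have [h|h|->] := ltgtP (f i) alpha.
- by rewrite u0 // subr0 mulr_ge0_le0 // subr_le0 ltW.
- by rewrite u1 // mulr_le0_ge0 // ?subr_le0 // subr_ge0 ltW.
- by rewrite subrr mulr0.
Qed.

Lemma threshold_maximizer M u : inX omega r M u -> is_threshold u ->
  is_maximizer f M u.
Proof.
move=> uX thu; split=> // v [v01 vM]; rewrite -subr_le0.
rewrite ipV_sub_centered; last by rewrite vM uX.2.
by apply: sumr_le0 => i _; apply: threshold_gap_le0.
Qed.

Lemma maximizer_eq_threshold M u v : inX omega r M u -> is_threshold u ->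
  is_maximizer f M v -> forall i, f i != alpha -> v i = u i.
Proof.
move=> uX thu [vX v_max] i fi.
have gap_sum : \sum_i w i * (v i - u i) * (f i - alpha) = 0.
  rewrite -ipV_sub_centered; last by rewrite vX.2 uX.2.
  apply/eqP; rewrite eq_le subr_le0 (threshold_maximizer uX thu).2 //.
  by rewrite subr_ge0 v_max.
have gap0 : w i * (v i - u i) * (f i - alpha) = 0.
  apply/eqP; rewrite -oppr_eq0; apply/eqP; move: i isT {fi}; apply: psumr_eq0P.
    by move=> i _; rewrite oppr_ge0; apply: threshold_gap_le0 vX.1 thu.
  by rewrite sumrN gap_sum oppr0.
move/eqP: gap0; rewrite !mulf_eq0 (gt_eqF (w_gt0 i)) /= !subr_eq0 (negbTE fi) orbF.
by move/eqP.
Qed.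

End Threshold.

Lemma weighted_sum_full (P : pred V) x : in01 x ->
  \sum_(i | P i) w i * x i = \sum_(i | P i) w i -> forall i, P i -> x i = 1.
Proof.
move=> x01 sum_x.
have gap_ge0 i : P i -> 0 <= w i * (1 - x i).
  by move=> _; rewrite mulr_ge0 ?(ltW (w_gt0 i)) // subr_ge0; case/andP: (x01 i).
have gap_sum : \sum_(i | P i) w i * (1 - x i) = 0.
  by under eq_bigr do rewrite mulrBr mulr1; rewrite sumrB sum_x subrr.
move=> i /(psumr_eq0P gap_ge0 gap_sum) /eqP.
by rewrite mulf_eq0 (gt_eqF (w_gt0 i)) subr_eq0 => /eqP.
Qed.

Lemma exists_level_perturbation (P : pred V) s i0 j : 0 < s < 1 ->
  P i0 -> P j -> i0 != j ->
  exists x, [/\ in01 x, \sum_(i | P i) w i * x i = \sum_(i | P i) w i * s & x i0 != s].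
Proof.
move=> /andP[s0 s1] Pi0 Pj ne.
pose d := Num.min ((1 - s) * w i0) (s * w j).
have d_gt0 : 0 < d by rewrite lt_min !mulr_gt0 ?subr_gt0.
have di0 : d / w i0 <= 1 - s by rewrite ler_pdivrMr // ge_min lexx.
have dj : d / w j <= s by rewrite ler_pdivrMr // ge_min lexx orbT.
have di0_gt0 : 0 < d / w i0 by rewrite divr_gt0.
have dj_gt0 : 0 < d / w j by rewrite divr_gt0.
pose x i := if i == i0 then s + d / w i0 else if i == j then s - d / w j else s.
have wx_i0 : w i0 * x i0 = w i0 * s + d.
  by rewrite /x eqxx mulrDr mulrCA divff ?mulr1 // gt_eqF.
have wx_j : w j * x j = w j * s - d.
  by rewrite /x eq_sym (negbTE ne) eqxx mulrBr mulrCA divff ?mulr1 // gt_eqF.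
exists x; split.
- move=> i; rewrite /x; case: ifP => _; first by apply/andP; split; lra.
  by case: ifP => _; apply/andP; split; lra.
- rewrite (bigD1 i0) // [in RHS](bigD1 i0) //= (bigD1 j) ?Pj 1?eq_sym //=.
  rewrite [in RHS](bigD1 j) ?Pj 1?eq_sym //= wx_i0 wx_j.
  rewrite (eq_bigr (fun i => w i * s)); first by ring.
  by move=> i /andP[/andP[_ /negbTE ni0] /negbTE nj]; rewrite /x ni0 nj.
- by rewrite /x eqxx -subr_eq0 addrC addKr gt_eqF.
Qed.

End Maximizers.

Section AtThresholdIndex.
Variables (R : realType) (V : finType) (omega : V -> V -> R) (r : R).
Hypothesis w_gt0 : forall i, 0 < degr omega r i.
Variables (f : V -> R) (M : R) (k : nat).
Hypotheses (k_lt : (k < size (values f))%N)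
  (k_threshold : tailsum omega r f k.+1 < M <= tailsum omega r f k).

Local Notation w := (degr omega r).
Local Notation T := (tailsum omega r f).
Local Notation alpha := (nth 0 (values f) k).
Local Notation a := (aval omega r f alpha).
Local Notation c := (M - T k.+1).
Local Notation level_sum u := (\sum_(i | f i == alpha) w i * u i).

Lemma mass_threshold_at u : is_threshold f alpha u ->
  mass omega r u = T k.+1 + level_sum u.
Proof. by move=> thu; rewrite (mass_threshold _ _ thu) tailsumS_gt. Qed.

Lemma aval_nth_gt0 : 0 < a.
Proof.
have [i0 fi0] := nth_values_attained k_lt.
rewrite /aval (bigD1 i0) /=; last by rewrite fi0.
by rewrite ltr_wpDr ?w_gt0 // sumr_ge0 // => i _; apply: ltW.
Qed.

Lemma residual_mass_gt0 : 0 < c.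
Proof. by rewrite subr_gt0; case/andP: k_threshold. Qed.

Lemma residual_mass_le_aval : c <= a.
Proof. by rewrite lerBlDr -tailsumS //; case/andP: k_threshold. Qed.

Lemma maximizer_threshold_fun x : in01 x -> level_sum x = c ->
  is_maximizer omega r f M (threshold_fun f alpha x).
Proof.
move=> x01 sum_x; have thx := threshold_fun_is_threshold f alpha x.
apply: (threshold_maximizer w_gt0 _ thx).
split; first exact: threshold_fun_in01.
rewrite mass_threshold_at //.
under eq_bigr => i fi do rewrite threshold_fun_level //.
by rewrite sum_x addrC subrK.
Qed.

Lemma level_sum_uniform : level_sum (fun _ => c / a) = c.
Proof. by rewrite -mulr_suml mulrC divfK // gt_eqF // aval_nth_gt0. Qed.

Lemma uniform_level_maximizer :
  is_maximizer omega r f M (threshold_fun f alpha (fun _ => c / a)).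
Proof.
apply: maximizer_threshold_fun; last exact: level_sum_uniform.
move=> _; apply/andP; split.
- by rewrite divr_ge0 // ltW // ?residual_mass_gt0 ?aval_nth_gt0.
- by rewrite ler_pdivrMr ?mul1r ?residual_mass_le_aval // aval_nth_gt0.
Qed.

Lemma maximizerP u : is_maximizer omega r f M u <->
  [/\ inX omega r M u, (forall i, f i < alpha -> u i = 0),
      (forall i, alpha < f i -> u i = 1) & c = level_sum u].
Proof.
split=> [u_max|[uX u0 u1 _]]; last first.
  by apply: (threshold_maximizer (alpha := alpha) w_gt0 uX).
have [ustarX _] := uniform_level_maximizer.
have eq_off := maximizer_eq_threshold w_gt0 ustarX (threshold_fun_is_threshold _ _ _) u_max.
have [u0 u1] : is_threshold f alpha u.
  have [ustar0 ustar1] := threshold_fun_is_threshold f alpha (fun _ => c / a).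
  split=> i h; rewrite eq_off ?(lt_eqF h) ?(gt_eqF h) //.
  - exact: ustar0.
  - exact: ustar1.
split=> //; first exact: u_max.1.
by rewrite -(u_max.1).2 mass_threshold_at // addrC addKr.
Qed.

Lemma maximizer_unique : (M = T k \/ exists! i, f i = alpha) ->
  forall u v, is_maximizer omega r f M u -> is_maximizer omega r f M v -> u = v.
Proof.
move=> level_det u v /maximizerP[[u01 _] u0 u1 su] /maximizerP[[v01 _] v0 v1 sv].
apply: funext => i; have [h|h|/eqP fi] := ltgtP (f i) alpha.
- by rewrite u0 ?v0.
- by rewrite u1 ?v1.
case: level_det => [MT|[i0 [fi0 i0_uniq]]].
  have ca : c = a by rewrite MT tailsumS // addrK.
  have level_full x : in01 x -> c = level_sum x -> x i = 1.
    move=> x01 sx; apply: (weighted_sum_full (P := fun j => f j == alpha) w_gt0 x01 _ fi).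
    by rewrite -sx ca.
  by rewrite (level_full u) ?(level_full v).
have level1 x : level_sum x = w i0 * x i0.
  by apply: big_pred1 => j /=; apply/eqP/eqP => [/i0_uniq ->|->].
rewrite -(i0_uniq i (eqP fi)); apply: (@mulfI _ (w i0)); first by rewrite gt_eqF.
by rewrite -!level1 -su -sv.
Qed.

Lemma maximizers_differ i0 j : M != T k -> f i0 = alpha -> f j = alpha -> i0 != j ->
  exists u v, [/\ is_maximizer omega r f M u, is_maximizer omega r f M v & u <> v].
Proof.
move=> MT fi0 fj ne; set s := c / a.
have s_gt0 : 0 < s by rewrite divr_gt0 ?residual_mass_gt0 ?aval_nth_gt0.
have s_lt1 : s < 1.
  rewrite ltr_pdivrMr ?mul1r ?aval_nth_gt0 // lt_neqAle residual_mass_le_aval andbT.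
  by apply: contraNneq MT => ca; rewrite tailsumS // -ca subrK.
have s01 : 0 < s < 1 by rewrite s_gt0 s_lt1.
have [x [x01 sum_x xi0]] := exists_level_perturbation (P := fun i => f i == alpha)
  w_gt0 s01 (introT eqP fi0) (introT eqP fj) ne.
exists (threshold_fun f alpha (fun _ => s)), (threshold_fun f alpha x); split.
- exact: uniform_level_maximizer.
- by apply: maximizer_threshold_fun; rewrite // sum_x level_sum_uniform.
- move/(congr1 (fun u => u i0)); rewrite !threshold_fun_level ?fi0 //.
  by move/esym/eqP; rewrite (negbTE xi0).
Qed.

Lemma unique_maximizerP : (exists! u, is_maximizer omega r f M u) <->
  (M = T k \/ exists! i, f i = alpha).
Proof.
split=> [[u [u_max u_uniq]]|level_det]; last first.
  have ustar_max := uniform_level_maximizer.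
  exists (threshold_fun f alpha (fun _ => c / a)); split=> // v v_max.
  exact: maximizer_unique.
have [MT|MT] := eqVneq M (T k); [by left | right].
have [i0 fi0] := nth_values_attained k_lt.
exists i0; split=> // j fj; apply/eqP/negPn/negP => ne.
have [v1 [v2 [v1_max v2_max]]] := maximizers_differ MT fi0 fj ne.
by rewrite -(u_uniq _ v1_max) -(u_uniq _ v2_max).
Qed.

End AtThresholdIndex.

Lemma deg_eq0_singleton (R : realType) (V : finType) (omega : V -> V -> R) i :
  is_weighted_graph omega -> deg omega i = 0 -> forall j, j = i.
Proof.
move=> [_ [omega_ge0 [_ conn]]] deg0 j.
have omega0 l : omega i l = 0.
  by apply: (psumr_eq0P (P := predT) (F := omega i)) => // l' _; apply: omega_ge0.
case/connectP: (conn i j) => [[|y p]] /=; first by move=> _ ->.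
by rewrite omega0 ltxx.
Qed.

Lemma degr_gt0 (R : realType) (V : finType) (omega : V -> V -> R) (r : R) (u : V -> R) :
  is_weighted_graph omega -> 0 < mass omega r u -> forall i, 0 < degr omega r i.
Proof.
(* An isolated vertex has [d_i^r = 0] when [r > 0]; only the positive mass excludes it. *)
move=> graph mass_gt0 i; rewrite lt_neqAle powR_ge0 andbT eq_sym.
have [deg0|deg_neq0] := eqVneq (deg omega i) 0; last first.
  by rewrite /degr powR_eq0 (negbTE deg_neq0).
apply/eqP => degr0; move: mass_gt0.
rewrite /mass /ipV (bigD1 i) //= big1 ?addr0 ?degr0 ?mulr0 ?ltxx //.
by move=> j /eqP []; apply: deg_eq0_singleton graph deg0 j.
Qed.

Theorem theorem26 (R : realType) (V : finType) (omega : V -> V -> R) (r : R)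
  (Hgraph : is_weighted_graph omega) (Hr : 0 <= r <= 1)
  (tau : R) (Htau : 0 < tau) (un : V -> R) (Hun : in01 un)
  (HM : 0 < mass omega r un) :
  let M := mass omega r un in
  let f := heat omega r tau un in
  let K := size (values f) in
  let cond k := tailsum omega r f k.+1 < M <= tailsum omega r f k in
  exists k : nat,
    [/\ (k < K)%N, cond k,
        (forall k' : nat, (k' < K)%N -> cond k' -> k' = k),
        (forall u : V -> R, inS omega r tau un u <->
           [/\ inX omega r M u,
               (forall i, f i < nth 0 (values f) k -> u i = 0),
               (forall i, nth 0 (values f) k < f i -> u i = 1) &
               M - tailsum omega r f k.+1 =
                 \sum_(i | f i == nth 0 (values f) k) degr omega r i * u i])
      & ((exists! u : V -> R, inS omega r tau un u) <->
           (M = tailsum omega r f k \/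
            exists! i : V, f i = nth 0 (values f) k))].
Proof.
move=> M f K cond.
have w_gt0 := degr_gt0 Hgraph HM.
have w_ge0 i : 0 <= degr omega r i by apply: ltW.
have M_le : M <= tailsum omega r f 0.
  rewrite tailsum0 /M /mass /ipV; apply: ler_sum => i _.
  by rewrite mulr1 ler_piMl ?w_ge0 //; case/andP: (Hun i).
have [k k_lt k_cond] := threshold_index_exists HM M_le.
exists k; split=> //.
- by move=> k' _ k'_cond; exact (threshold_index_unique w_ge0 k_cond k'_cond).
- exact (maximizerP w_gt0 k_lt k_cond).
- exact (unique_maximizerP w_gt0 k_lt k_cond).
Qed.
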